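(* Let $\underline A=(A_1,\dots,A_m)\in{\rm Mat}(d,\mathbb{R})^m$ and $1\le k\le d$, and assume (1) $\mathrm{rank}(A_j)=k$ for all $j$, and (2) $\mathrm{rank}(A_aA_b)=k$ for every $a,b\in\{1,\dots,m\}$. For $1\le l\le m$ let $R_l:=\mathrm{Range}(A_l)$. Then for every $n\in\mathbb N$ and $i_1,\dots,i_n\in\{1,\dots,m\}$, the restriction $A_lA_{i_1}\cdots A_{i_n}|_{R_l}:R_l\to R_l$ is a linear isomorphism. Let $\mathcal G_l\subseteq\mathrm{GL}(R_l)$ be the group generated by all these automorphisms of $R_l$. Then: (a) for all $1\le i,j\le m$ the groups $\mathcal G_i$ and $\mathcal G_j$ are conjugate; (b) if some $\mathcal G_l$ is Zariski dense in $\mathrm{GL}(R_l)$, then $\wedge_i\underline A$ is irreducible for all $1\le i\le k$.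
   Context: $\wedge_iA$ denotes the $i$-th exterior power of a matrix $A$ (the matrix of its $i\times i$ minors) and $\wedge_i\underline A=(\wedge_iA_1,\dots,\wedge_iA_m)$. A tuple $(D_1,\dots,D_m)$ of $N\times N$ real matrices is called reducible if there exist subspaces $V_1,\dots,V_m$ with $\{0\}\ne V_j\subsetneq\mathrm{Range}(D_j)$ and $D_aV_b=V_a$ for all $a,b\in\{1,\dots,m\}$; otherwise it is irreducible. *)

From HB Require Import structures.
From mathcomp Require Import all_boot all_order all_algebra.
From mathcomp Require Import reals.
From mathcomp Require Import mpoly.

Set Implicit Arguments.
Unset Strict Implicit.
Unset Printing Implicit Defensive.

Import Order.TTheory GRing.Theory Num.Theory.
Local Open Scope ring_scope.

(* Vectors of R^N are column vectors and a matrix D acts by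
   v |-> D *m v.  MathComp's mxalgebra represents subspaces as row spaces,
   so a subspace V of R^N (column vectors) is encoded by a matrix whose rows
   are the transposes of vectors spanning V.  Hence:
     Range(D)  is encoded by  D^T          (its column space),
     D V       is encoded by  V *m D^T.                                     *)

Section Defs.
Variable R : realType.

Definition Range (N : nat) (D : 'M[R]_N) : 'M[R]_N := D^T.

Definition img (N p : nat) (D : 'M[R]_N) (V : 'M[R]_(p, N)) : 'M[R]_(p, N) :=
  V *m D^T.

Definition reducible (m N : nat) (D : 'I_m -> 'M[R]_N) : Prop :=
  exists V : 'I_m -> 'M[R]_N,
    (forall j, V j != 0 /\ (V j < Range (D j))%MS) /\
    (forall a b, (img (D a) (V b) == V a)%MS).

Definition irreducible (m N : nat) (D : 'I_m -> 'M[R]_N) : Prop :=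
  ~ reducible D.

Definition subsets (d i : nat) := {S : {set 'I_d} | #|S| == i}.

(* the a-th element (in increasing order) of an i-subset *)
Definition sidx (d i : nat) (S : subsets d i) (a : 'I_i) : 'I_d :=
  enum_val (cast_ord (esym (eqP (valP S))) a).

(* i-th exterior power: matrix of i x i minors, rows/cols indexed by the
   i-subsets of {1..d} (enumerated in the finType order of [subsets d i]). *)
Definition wedge (d i : nat) (A : 'M[R]_d) : 'M[R]_#|{: subsets d i}| :=
  \matrix_(p, q)
    \det (\matrix_(a < i, b < i) A (sidx (enum_val p) a) (sidx (enum_val q) b)).

Definition wordprod (m d : nat) (A : 'I_m -> 'M[R]_d) (w : seq 'I_m) : 'M[R]_d :=
  foldr (fun i M => A i *m M) 1%:M w.

(* Given B : 'M_(k,d) whose rows are (transposes of) a basis b_1..b_k of a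
   subspace W, and M with M W <= W, [restr B M] is the k x k matrix of
   M|_W in the basis b_1..b_k (column convention: M b_s = sum_r X r s b_r). *)
Definition restr (k d : nat) (B : 'M[R]_(k, d)) (M : 'M[R]_d) : 'M[R]_k :=
  (B *m M^T *m pinvmx B)^T.

Inductive gen_group (k : nat) (S : 'M[R]_k -> Prop) : 'M[R]_k -> Prop :=
| gen_one : gen_group S 1%:M
| gen_in X : S X -> gen_group S X
| gen_mul X Y : gen_group S X -> gen_group S Y -> gen_group S (X *m Y)
| gen_inv X : gen_group S X -> gen_group S (invmx X).

Definition Ggroup (m k d : nat) (A : 'I_m -> 'M[R]_d) (B : 'M[R]_(k, d))
  (l : 'I_m) : 'M[R]_k -> Prop :=
  gen_group (fun X => exists w : seq 'I_m, X = restr B (A l *m wordprod A w)).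

Definition conjugate (k : nat) (G H : 'M[R]_k -> Prop) : Prop :=
  exists P : 'M[R]_k, P \in unitmx /\
    forall X, G X <-> H (invmx P *m X *m P).

Definition zariski_dense (k : nat) (G : 'M[R]_k -> Prop) : Prop :=
  forall p : {mpoly R[k * k]},
    (forall X, G X -> p.@[fun t => mxvec X 0 t] = 0) ->
    forall X, X \in unitmx -> p.@[fun t => mxvec X 0 t] = 0.

End Defs.

(* Since rank (A_a A_b) = rank A_b = k, every A_a maps R_b isomorphically
   onto R_a, hence all words A_l A_{i_1} ... A_{i_n} restrict to
   automorphisms of R_l.  With T := A_i : R_j -> R_i and T' := A_j : R_i -> R_j,
   T^-1 g T = (T' T)^-1 (T' g T) for g in G_i, and both T' T = A_j A_i and
   T' g T are generators of G_j; symmetrically for T g T^-1, so T conjugates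
   G_i onto G_j.
   If (V_j) reduces the exterior powers, then V_l is a nonzero proper
   subspace of the i-th exterior power of R_l stable under the i-th exterior
   power of every g in G_l.  Stability is a polynomial condition on g, so by
   Zariski density it holds on GL(R_l), and, multiplying by the determinant,
   for every endomorphism of R_l.  But the partial permutation matrices
   already move any nonzero vector onto every basis vector of the exterior
   power, so V_l could not be proper. *)

From HB Require Import structures.
From mathcomp Require Import all_boot all_order all_algebra.
From mathcomp Require Import fingroup perm.
From mathcomp Require Import reals.
From mathcomp Require Import mpoly.

Set Implicit Arguments.
Unset Strict Implicit.
Unset Printing Implicit Defensive.

Import Order.TTheory GRing.Theory Num.Theory.
Local Open Scope ring_scope.

Section Subsets.
Variables n i : nat.
Implicit Types S T : subsets n i.

Lemma sidx_mem S a : sidx S a \in val S.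
Proof. exact: enum_valP. Qed.

Lemma sidx_inj S : injective (sidx S).
Proof. by move=> a b /enum_val_inj /cast_ord_inj. Qed.

Lemma sidx_onto S x : x \in val S -> exists a, sidx S a = x.
Proof.
move=> Sx; exists (cast_ord (eqP (valP S)) (enum_rank_in Sx x)).
by rewrite /sidx cast_ordK enum_rankK_in.
Qed.

Lemma subsets_neq S T : S != T -> exists2 x, x \in val S & x \notin val T.
Proof.
move=> neqST; apply/subsetPn; apply: contra neqST => sST.
apply/eqP/val_inj/eqP.
by rewrite eqEcard (eqP (valP S)) (eqP (valP T)) leqnn andbT.
Qed.

Definition ordered_subset (Ss : subsets n i * 'S_i) : {ffun 'I_i -> 'I_n} :=
  [ffun a => sidx Ss.1 (Ss.2 a)].

Lemma ordered_subset_inj : injective ordered_subset.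
Proof.
move=> [S s] [T t] /ffunP Est.
have sub_ST (U V : subsets n i) (u v : 'S_i) :
    (forall a, sidx U (u a) = sidx V (v a)) -> val U \subset val V.
  move=> E; apply/subsetP => x /sidx_onto[a <-].
  by have := E (u^-1 a)%g; rewrite permKV => ->; apply: sidx_mem.
have Est' a : sidx S (s a) = sidx T (t a) by have := Est a; rewrite !ffunE.
have eqST : S = T.
  apply/val_inj/eqP; rewrite eqEsubset (sub_ST _ _ _ _ Est') /=.
  by apply: (sub_ST _ _ t s) => a; rewrite Est'.
subst T; congr (_, _); apply/permP => a; exact: sidx_inj (Est' a).
Qed.

Lemma injectiveb_ordered_subset (f : {ffun 'I_i -> 'I_n}) :
  injectiveb f = (f \in [set ordered_subset Ss | Ss in setT]).
Proof.
apply/injectiveP/imsetP => [inj_f | [[S s] _ ->] a b]; last first.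
  by rewrite !ffunE => /sidx_inj /perm_inj.
have cardS : #|[set f a | a in 'I_i]| == i by rewrite card_imset // card_ord.
pose S : subsets n i := exist (fun U : {set _} => #|U| == i) _ cardS.
have /fin_all_exists[t Et] a : exists b, sidx S b = f a.
  by apply: sidx_onto; apply: imset_f.
have inj_t : injective t by move=> a b Eab; apply: inj_f; rewrite -!Et Eab.
by exists (S, perm inj_t) => //; apply/ffunP => a; rewrite !ffunE /= permE Et.
Qed.

End Subsets.

Section CauchyBinet.
Variable R : comPzRingType.

Lemma det_mulmx_ffun n i (P : 'M[R]_(i, n)) (Q : 'M[R]_(n, i)) :
  \det (P *m Q) =
    \sum_(f : {ffun 'I_i -> 'I_n}) (\prod_a P a (f a)) * \det (rowsub f Q).
Proof.
rewrite [LHS]big_mkcond /=.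
under eq_bigr => s _.
  rewrite (eq_bigr (fun a => \sum_c P a c * Q c (s a))) => [|a _]; last first.
    by rewrite mxE.
  rewrite bigA_distr_bigA big_distrr /=.
  over.
rewrite exchange_big /=; apply: eq_bigr => f _.
rewrite [\det (rowsub f Q)]big_mkcond big_distrr /=; apply: eq_bigr => s _.
rewrite big_split /= mulrCA; congr (_ * (_ * _)).
by apply: eq_bigr => a _; rewrite mxE.
Qed.

Theorem cauchy_binet n i (P : 'M[R]_(i, n)) (Q : 'M[R]_(n, i)) :
  \det (P *m Q) =
    \sum_(S : subsets n i) \det (colsub (sidx S) P) * \det (rowsub (sidx S) Q).
Proof.
rewrite det_mulmx_ffun (bigID (fun f : {ffun 'I_i -> 'I_n} => injectiveb f)) /=.
rewrite [X in _ + X]big1 ?addr0 => [|f /injectivePn[a [b neq_ab Efab]]];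
  last first.
  by rewrite (determinant_alternate neq_ab) ?mulr0 // => j; rewrite !mxE Efab.
rewrite (eq_bigl _ _ (@injectiveb_ordered_subset n i)) big_imset /=; last first.
  by move=> x y _ _; apply: ordered_subset_inj.
rewrite (eq_bigl (fun Ss => predT Ss.1 && predT Ss.2)) => [|Ss]; last first.
  by rewrite in_setT.
rewrite -(pair_big predT predT (fun S s =>
  (\prod_a P a (ordered_subset (S, s) a)) *
  \det (rowsub (ordered_subset (S, s)) Q))).
apply: eq_bigr => S _.
rewrite [\det (colsub _ P)]big_mkcond big_distrl /=; apply: eq_bigr => s _.
have -> : rowsub (ordered_subset (S, s)) Q = row_perm s (rowsub (sidx S) Q).
  by apply/matrixP => a b; rewrite !mxE ffunE.
rewrite row_permE det_mulmx det_perm mulrA [_ * (-1) ^+ _]mulrC.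
by congr (_ * _ * _); apply: eq_bigr => a _; rewrite !mxE ffunE.
Qed.

End CauchyBinet.

Section ExteriorPower.
Variable R : comPzRingType.

Definition minor m n i (S : subsets m i) (T : subsets n i) (M : 'M[R]_(m, n)) :=
  \det (mxsub (sidx S) (sidx T) M).

Definition wedge_mx i m n (M : 'M[R]_(m, n)) :
    'M[R]_(#|{: subsets m i}|, #|{: subsets n i}|) :=
  \matrix_(p, q) minor (enum_val p) (enum_val q) M.

Lemma minor_row_eq0 m n i (S : subsets m i) (T : subsets n i)
    (M : 'M[R]_(m, n)) x :
  x \in val S -> (forall b, M x (sidx T b) = 0) -> minor S T M = 0.
Proof.
case/sidx_onto=> a <- Mx0; rewrite /minor (expand_det_row _ a) big1 // => b _.
by rewrite mxE Mx0 mul0r.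
Qed.

Lemma minor_tr m n i (S : subsets m i) (T : subsets n i) (M : 'M[R]_(m, n)) :
  minor T S M^T = minor S T M.
Proof. by rewrite /minor -trmx_mxsub det_tr. Qed.

Lemma minor_col_eq0 m n i (S : subsets m i) (T : subsets n i)
    (M : 'M[R]_(m, n)) y :
  y \in val T -> (forall a, M (sidx S a) y = 0) -> minor S T M = 0.
Proof.
move=> Ty M0y; rewrite -minor_tr (minor_row_eq0 Ty) // => a.
by rewrite mxE M0y.
Qed.

Lemma wedge_mxM i m n p (M : 'M[R]_(m, n)) (N : 'M[R]_(n, p)) :
  wedge_mx i (M *m N) = wedge_mx i M *m wedge_mx i N.
Proof.
apply/matrixP => x y; rewrite !mxE /minor mxsub_mul cauchy_binet.
rewrite (reindex (@enum_rank _)) /=; last first.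
  by apply: onW_bij; apply: enum_rank_bij.
apply: eq_bigr => U _; rewrite !mxE /minor enum_rankK.
by congr (_ * _); congr (\det _); apply/matrixP => a b; rewrite !mxE.
Qed.

Lemma wedge_mx_tr i m n (M : 'M[R]_(m, n)) : wedge_mx i M^T = (wedge_mx i M)^T.
Proof. by apply/matrixP => x y; rewrite !mxE minor_tr. Qed.

Lemma wedge_mx1 i n : wedge_mx i (1%:M : 'M[R]_n) = 1%:M.
Proof.
apply/matrixP => x y; rewrite !mxE.
have [<-|neq_xy] := eqVneq x y.
  rewrite /minor [mxsub _ _ _](_ : _ = 1%:M) ?det1 //; apply/matrixP => a b.
  by rewrite !mxE (inj_eq (@sidx_inj _ _ _)).
have /subsets_neq[z Sz Tz] : enum_val x != enum_val y.
  by rewrite (inj_eq enum_val_inj).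
apply: (minor_row_eq0 Sz) => b; rewrite mxE.
by case: eqP Tz => // ->; rewrite sidx_mem.
Qed.

Definition subset_mx n i (S T : subsets n i) : 'M[R]_n :=
  \sum_c delta_mx (sidx S c) (sidx T c).

Lemma subset_mxE n i (S T : subsets n i) x y :
  subset_mx S T x y = \sum_c ((x == sidx S c) && (y == sidx T c))%:R.
Proof. by rewrite summxE; apply: eq_bigr => c _; rewrite mxE. Qed.

Lemma wedge_subset_mx n i (S T : subsets n i) :
  wedge_mx i (subset_mx S T) = delta_mx (enum_rank S) (enum_rank T).
Proof.
apply/matrixP => x y; rewrite !mxE.
have [eS|neqS] := eqVneq (enum_val x) S; last first.
  rewrite (_ : x == enum_rank S = false); last first.
    by apply: contraNF neqS => /eqP->; rewrite enum_rankK.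
  have [z Sz S'z] := subsets_neq neqS.
  apply: (minor_row_eq0 Sz) => b; rewrite subset_mxE big1 // => c _.
  by case: eqP S'z => //= ->; rewrite sidx_mem.
have [eT|neqT] := eqVneq (enum_val y) T; last first.
  rewrite (_ : y == enum_rank T = false) ?andbF; last first.
    by apply: contraNF neqT => /eqP->; rewrite enum_rankK.
  have [z Tz T'z] := subsets_neq neqT.
  apply: (minor_col_eq0 Tz) => a; rewrite subset_mxE big1 // => c _.
  case: (z =P sidx T c) T'z => [-> /negP[]|_]; last by rewrite andbF.
  exact: sidx_mem.
rewrite -eS -eT !enum_valK !eqxx /minor eS eT.
rewrite [mxsub _ _ _](_ : _ = 1%:M) ?det1 //; apply/matrixP => a b.
rewrite !mxE subset_mxE (bigD1 a) //= big1 ?addr0 => [|c neq_ca].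
  by rewrite !(inj_eq (@sidx_inj _ _ _)) eqxx /= eq_sym.
by rewrite (inj_eq (@sidx_inj _ _ _)) eq_sym (negbTE neq_ca).
Qed.

End ExteriorPower.
Arguments subset_mx {R n i}.

Lemma wedge_mx_map (R R' : comPzRingType) (f : {rmorphism R -> R'}) i m n
    (M : 'M[R]_(m, n)) :
  map_mx f (wedge_mx i M) = wedge_mx i (map_mx f M).
Proof. by apply/matrixP => x y; rewrite !mxE /minor -det_map_mx map_mxsub. Qed.

Section ExteriorPowerSubspaces.
Variable F : fieldType.

Lemma stablemx_inv n p (U : 'M[F]_(p, n)) (T T' : 'M[F]_n) :
  T *m T' = 1%:M -> stablemx U T -> stablemx U T'.
Proof.
move=> TT' sUT; have eqUT : (U *m T == U)%MS.
  rewrite -(mxrank_leqif_eq sUT) eqn_leq mxrankS //=.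
  by rewrite -{1}[U]mulmx1 -TT' mulmxA mxrankM_maxl.
by rewrite -(eqmxMr T' (eqmxP eqUT)) -mulmxA TT' mulmx1.
Qed.

Lemma wedge_row_free i m n (M : 'M[F]_(m, n)) :
  row_free M -> row_free (wedge_mx i M).
Proof.
case/row_freeP=> N MN; apply/row_freeP; exists (wedge_mx i N).
by rewrite -wedge_mxM MN wedge_mx1.
Qed.

Lemma wedge_coordK i k d p (C : 'M[F]_(k, d))
    (U : 'M[F]_(p, #|{: subsets d i}|)) :
  row_free C -> (U <= wedge_mx i C)%MS ->
  U *m wedge_mx i (pinvmx C) *m wedge_mx i C = U.
Proof.
move=> freeC /submxP[Z ->].
by rewrite -!mulmxA -!wedge_mxM mulmxA mulmxVp // mul1mx.
Qed.

(* [U *m wedge_mx i (pinvmx C)] is [U] written in the coordinates of the basis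
   [C] of its ambient space [W]; [X] is the coordinate matrix of [M] on [W]. *)
Lemma stablemx_wedge_coord i k d p (C : 'M[F]_(k, d))
    (U : 'M[F]_(p, #|{: subsets d i}|)) (X : 'M[F]_k) (M : 'M[F]_d) :
  row_free C -> (U <= wedge_mx i C)%MS -> X *m C = C *m M ->
  stablemx (U *m wedge_mx i (pinvmx C)) (wedge_mx i X) =
    stablemx U (wedge_mx i M).
Proof.
move=> freeC sUC XC; have U'C := wedge_coordK freeC sUC.
set U' := U *m _ in U'C *.
rewrite -(submxMfree _ _ (wedge_row_free i freeC)) U'C.
by rewrite -mulmxA -wedge_mxM XC wedge_mxM mulmxA U'C.
Qed.

Lemma wedge_mxS i m1 m2 n (M : 'M[F]_(m1, n)) (N : 'M[F]_(m2, n)) :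
  (M <= N)%MS -> (wedge_mx i M <= wedge_mx i N)%MS.
Proof. by case/submxP=> Z ->; rewrite wedge_mxM submxMl. Qed.

(* The matrices [subset_mx S T] already move any nonzero vector of the
   exterior power onto every basis vector. *)
Lemma wedge_stable_full i n p (U : 'M[F]_(p, #|{: subsets n i}|)) :
  U != 0 -> (forall Y : 'M[F]_n, stablemx U (wedge_mx i Y)) -> row_full U.
Proof.
case/matrix0Pn=> r [c Urc] stableU; rewrite -sub1mx; apply/row_subP => c'.
have := stableU (subset_mx (enum_val c) (enum_val c')).
rewrite wedge_subset_mx !enum_valK row1 => /(submx_trans (row_sub r _)).
have -> : row r (U *m delta_mx c c') = U r c *: delta_mx 0 c'.
  apply/matrixP => a b; rewrite !mxE (bigD1 c) //= big1 ?addr0 => [|x neq_xc].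
    by rewrite !mxE eqxx (ord1 a).
  by rewrite !mxE (negbTE neq_xc) mulr0.
by rewrite -{2}(scalerK Urc (delta_mx 0 c')) => /(scalemx_sub (U r c)^-1).
Qed.

End ExteriorPowerSubspaces.

Lemma horner_mmap (R : comNzRingType) n (q : {mpoly R[n]})
    (h : 'I_n -> {poly R}) t :
  (mmap polyC h q).[t] = q.@[fun i => (h i).[t]].
Proof.
rewrite mevalE -horner_evalE rmorph_sum; apply: eq_bigr => m _.
rewrite rmorphM /= horner_evalE hornerC rmorph_prod; congr (_ * _).
by apply: eq_bigr => i _; rewrite rmorphXn.
Qed.

Lemma poly_vanishing_eq0 (R : numDomainType) (p : {poly R}) :
  (forall t, p.[t] = 0) -> p = 0.
Proof.
move=> p0; apply: (@roots_geq_poly_eq0 _ _ [seq j%:R | j <- iota 0 (size p)]).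
- by apply/allP => _ /mapP[j _ ->]; apply/rootP.
- by rewrite map_inj_uniq ?iota_uniq // => a b /eqP; rewrite eqr_nat => /eqP.
- by rewrite size_map size_iota.
Qed.

Section VanishingOnUnits.
Variable R : numFieldType.

(* [q (X + t) * det (X + t)] vanishes for every scalar [t], and
   [det (X + t)] is a nonzero polynomial in [t]; so [q (X + t)] is the zero
   polynomial in [t]. *)
Lemma mpoly_vanishing_unitmx k (q : {mpoly R[k * k]}) :
  (forall X : 'M[R]_k, X \in unitmx -> q.@[fun t => mxvec X 0 t] = 0) ->
  forall X : 'M[R]_k, q.@[fun t => mxvec X 0 t] = 0.
Proof.
move=> q0 X.
pose Xt : 'M[{poly R}]_k := map_mx polyC X + 'X%:M.
have Xt_eval t : map_mx (horner_eval t) Xt = X + t%:M.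
  apply/matrixP => a b; rewrite !mxE /= horner_evalE.
  by rewrite hornerD hornerC hornerMn hornerX.
pose pq := mmap polyC (fun i => mxvec Xt 0 i) q.
have pq_eval t : pq.[t] = q.@[fun i => mxvec (X + t%:M) 0 i].
  rewrite horner_mmap; apply: meval_eq => i.
  by rewrite -Xt_eval -map_mxvec mxE.
have det_eval t : (\det Xt).[t] = \det (X + t%:M).
  by rewrite -horner_evalE -det_map_mx Xt_eval.
have detXt_neq0 : \det Xt != 0.
  have -> : \det Xt = char_poly (- X).
    by rewrite /char_poly /char_poly_mx map_mxN opprK addrC.
  exact: monic_neq0 (char_poly_monic _).
have : pq * \det Xt = 0.
  apply: poly_vanishing_eq0 => t; rewrite hornerM det_eval pq_eval.
  have [U|] := boolP (X + t%:M \in unitmx); first by rewrite q0 ?mul0r.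
  by rewrite unitmxE unitfE negbK => /eqP->; rewrite mulr0.
move/eqP; rewrite mulf_eq0 (negbTE detXt_neq0) orbF => /eqP pq0.
by have := pq_eval 0; rewrite pq0 horner0 raddf0 addr0.
Qed.

End VanishingOnUnits.

Definition generic_mx (R : comNzRingType) k : 'M[{mpoly R[k * k]}]_k :=
  \matrix_(a, b) 'X_(mxvec_index a b).

Lemma meval_generic_mx (R : comNzRingType) k (X : 'M[R]_k) :
  map_mx (meval (fun t => mxvec X 0 t)) (generic_mx R k) = X.
Proof. by apply/matrixP => a b; rewrite !mxE mevalXU mxvecE. Qed.

Lemma zariski_dense_mx_eq0 (R : realType) k p n (G : 'M[R]_k -> Prop)
    (Q : 'M[{mpoly R[k * k]}]_(p, n)) :
  zariski_dense G ->
  (forall X, G X -> map_mx (meval (fun t => mxvec X 0 t)) Q = 0) ->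
  forall X, map_mx (meval (fun t => mxvec X 0 t)) Q = 0.
Proof.
move=> denseG Q0 X; apply/matrixP => a b; rewrite !mxE.
apply: mpoly_vanishing_unitmx => {}X; apply: denseG => {}X GX.
by have /matrixP/(_ a b) := Q0 X GX; rewrite !mxE.
Qed.

Section InverseMatrix.
Variables (R : comUnitRingType) (k : nat).
Implicit Types P X Y : 'M[R]_k.

Lemma invmx_mul X Y : X \in unitmx -> Y \in unitmx ->
  invmx (X *m Y) = invmx Y *m invmx X.
Proof.
move=> uX uY; have uXY : X *m Y \in unitmx by rewrite unitmx_mul uX uY.
have inv_r : invmx Y *m invmx X *m (X *m Y) = 1%:M.
  by rewrite mulmxA -(mulmxA _ (invmx X)) mulVmx // mulmx1 mulVmx.
by rewrite -[LHS]mul1mx -inv_r -mulmxA mulmxV // mulmx1.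
Qed.

Lemma invmx_conj P X : P \in unitmx ->
  invmx (invmx P *m X *m P) = invmx P *m invmx X *m P.
Proof.
move=> uP; have [uX|uX'] := boolP (X \in unitmx).
  by rewrite !invmx_mul ?unitmx_mul ?unitmx_inv ?uP ?uX // invmxK mulmxA.
have uC' : invmx P *m X *m P \notin unitmx.
  by rewrite !unitmx_mul (negbTE uX') andbF.
by rewrite (invmx_out uC') (invmx_out uX').
Qed.

End InverseMatrix.

Section CoordinateMatrix.
Variables (F : fieldType) (k d : nat).
Implicit Types (B : 'M[F]_(k, d)) (M N : 'M[F]_d).

(* The matrix, in the row bases [B1] and [B2], of the map [v |-> M v] from
   the column space spanned by the rows of [B1] to that of [B2]. *)
Definition coord_mx B1 B2 M : 'M[F]_k := (B1 *m M^T *m pinvmx B2)^T.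

Lemma coord_mxE B1 B2 M : (B1 *m M^T <= B2)%MS ->
  (coord_mx B1 B2 M)^T *m B2 = B1 *m M^T.
Proof. by move=> sB12; rewrite trmxK mulmxKpV. Qed.

Lemma coord_mxM B1 B2 B3 M N :
  (B1 *m M^T <= B2)%MS -> (B2 *m N^T <= B3)%MS -> row_free B3 ->
  coord_mx B1 B3 (N *m M) = coord_mx B2 B3 N *m coord_mx B1 B2 M.
Proof.
move=> sB12 sB23 freeB3; apply: trmx_inj; rewrite [in RHS]trmx_mul.
apply: (row_free_inj freeB3).
have sB13 : (B1 *m (N *m M)^T <= B3)%MS.
  by rewrite trmx_mul mulmxA (submx_trans (submxMr _ sB12)).
rewrite /= coord_mxE // -mulmxA coord_mxE // mulmxA coord_mxE //.
by rewrite trmx_mul mulmxA.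
Qed.

Lemma coord_mx_unit B1 B2 M : (B1 *m M^T <= B2)%MS -> row_free B2 ->
  \rank (B1 *m M^T) = k -> coord_mx B1 B2 M \in unitmx.
Proof.
move=> sB12 freeB2 rk; rewrite -unitmx_tr -row_free_unit /row_free.
by rewrite eqn_leq rank_leq_row /= -{1}rk -(coord_mxE sB12) mxrankM_maxl.
Qed.

End CoordinateMatrix.

Lemma restrE (R : realType) k d (B : 'M[R]_(k, d)) (M : 'M[R]_d) :
  restr B M = coord_mx B B M.
Proof. by []. Qed.

Section GeneratedGroup.
Variables (R : realType) (k : nat).
Implicit Types (S : 'M[R]_k -> Prop) (P X Y : 'M[R]_k).

Lemma gen_group_morph S (S' : 'M[R]_k -> Prop) (phi : 'M[R]_k -> 'M[R]_k) :
  phi 1%:M = 1%:M -> (forall X Y, phi (X *m Y) = phi X *m phi Y) ->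
  (forall X, phi (invmx X) = invmx (phi X)) ->
  (forall X, S X -> gen_group S' (phi X)) ->
  forall X, gen_group S X -> gen_group S' (phi X).
Proof.
move=> phi1 phiM phiV phiS X; elim=> [|Y /phiS //|Y Z _ IHY _ IHZ|Y _ IHY].
- by rewrite phi1; apply: gen_one.
- by rewrite phiM; apply: gen_mul.
- by rewrite phiV; apply: gen_inv.
Qed.

Lemma gen_group_conj S (S' : 'M[R]_k -> Prop) P : P \in unitmx ->
  (forall X, S X -> gen_group S' (invmx P *m X *m P)) ->
  forall X, gen_group S X -> gen_group S' (invmx P *m X *m P).
Proof.
move=> uP; apply: gen_group_morph => [|X Y|X].
- by rewrite mulmx1 mulVmx.
- by rewrite !mulmxA mulmxK.
- by rewrite invmx_conj.
Qed.

End GeneratedGroup.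

Section DenseStability.
Variables (R : realType) (k i p : nat) (U : 'M[R]_(p, #|{: subsets k i}|)).

Lemma gen_group_wedge_stable (S : 'M[R]_k -> Prop) :
  (forall X, S X -> stablemx U (wedge_mx i X^T)) ->
  forall X, gen_group S X -> stablemx U (wedge_mx i X^T).
Proof.
move=> SU X; elim=> {X} [|X /SU //|X Y _ sX _ sY|X _ sX].
- by rewrite trmx1 wedge_mx1 mulmx1.
- by rewrite trmx_mul wedge_mxM stablemxM.
have [uX|/invmx_out-> //] := boolP (X \in unitmx).
apply: stablemx_inv sX.
by rewrite -wedge_mxM -trmx_mul mulVmx // trmx1 wedge_mx1.
Qed.

Lemma zariski_dense_wedge_stable (G : 'M[R]_k -> Prop) :
  zariski_dense G -> (forall X, G X -> stablemx U (wedge_mx i X^T)) ->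
  forall X, stablemx U (wedge_mx i X).
Proof.
move=> denseG GU X; rewrite -[X]trmxK.
pose mpC n1 n2 (M : 'M[R]_(n1, n2)) := map_mx (@mpolyC (k * k) R) M.
have meval_mpC v n1 n2 (M : 'M[R]_(n1, n2)) : map_mx (meval v) (mpC _ _ M) = M.
  by apply/matrixP => a b; rewrite !mxE mevalC.
pose Q := mpC _ _ U *m wedge_mx i (generic_mx R k)^T *m mpC _ _ (cokermx U).
have evalQ Y : map_mx (meval (fun t => mxvec Y 0 t)) Q =
    U *m wedge_mx i Y^T *m cokermx U.
  by rewrite !map_mxM wedge_mx_map -map_trmx meval_generic_mx !meval_mpC.
rewrite submxE -evalQ; apply/eqP; apply: (zariski_dense_mx_eq0 denseG) => Y GY.
by rewrite evalQ; apply/eqP; rewrite -submxE; apply: GU.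
Qed.

End DenseStability.

Lemma Range_wedge (R : realType) i n (D : 'M[R]_n) :
  Range (wedge i D) = wedge_mx i (Range D).
Proof. exact: esym (wedge_mx_tr i D). Qed.

Lemma img_wedge (R : realType) i n p (D : 'M[R]_n) (V : 'M[R]_(p, _)) :
  img (wedge i D) V = V *m wedge_mx i (Range D).
Proof. by rewrite /img -wedge_mx_tr. Qed.

Section Proposition.
Variables (R : realType) (m d k : nat) (A : 'I_m -> 'M[R]_d).
Hypothesis hrank : forall j, \rank (A j) = k.
Hypothesis hrank2 : forall a b, \rank (A a *m A b) = k.
Variable B : 'I_m -> 'M[R]_(k, d).
Hypothesis hB : forall l, row_free (B l) /\ (B l == Range (A l))%MS.

Lemma wordprod_rcons w a : wordprod A (rcons w a) = wordprod A w *m A a.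
Proof. by elim: w => [|b w IHw] /=; rewrite ?mul1mx ?mulmx1 ?IHw ?mulmxA. Qed.

(* Every [A_b W] has the same column space as [A_b], by a rank count. *)
Lemma rank_word a w : \rank (A a *m wordprod A w) = k.
Proof.
elim: w a => [|b w IHw] a /=; first by rewrite mulmx1.
have eq_bW : ((A b *m wordprod A w)^T :=: (A b)^T)%MS.
  have sub_bW : ((A b *m wordprod A w)^T <= (A b)^T)%MS.
    by rewrite trmx_mul submxMl.
  by apply/eqmxP; rewrite -(mxrank_leqif_eq sub_bW) !mxrank_tr IHw hrank.
by rewrite -mxrank_tr trmx_mul (eqmxMr _ eq_bW) -trmx_mul mxrank_tr hrank2.
Qed.

Lemma B_eqmx l : (B l :=: (A l)^T)%MS.
Proof. by apply/eqmxP; case: (hB l). Qed.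

Lemma B_row_free l : row_free (B l).
Proof. by case: (hB l). Qed.

Lemma B_word_sub a b w : (B a *m (A b *m wordprod A w)^T <= B b)%MS.
Proof. by rewrite (B_eqmx b) trmx_mul mulmxA submxMl. Qed.

Lemma B_word_rank a b w : \rank (B a *m (A b *m wordprod A w)^T) = k.
Proof.
rewrite (eqmxMr _ (B_eqmx a)) -trmx_mul mxrank_tr -mulmxA -wordprod_rcons.
exact: rank_word.
Qed.

Local Notation gen l w := (restr (B l) (A l *m wordprod A w)).

Lemma gen_unit l w : gen l w \in unitmx.
Proof.
by apply: coord_mx_unit; rewrite ?B_word_sub ?B_row_free ?B_word_rank.
Qed.

(* The matrix of [A_a : R_b -> R_a] in the bases [B b] and [B a]. *)
Local Notation transfer a b := (coord_mx (B b) (B a) (A a)).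

Lemma B_sub a b : (B a *m (A b)^T <= B b)%MS.
Proof. by have := B_word_sub a b [::]; rewrite /= mulmx1. Qed.

Lemma transfer_mul a b : transfer a b *m transfer b a = gen a [:: b].
Proof. by rewrite /= mulmx1 -coord_mxM ?B_sub ?B_row_free. Qed.

Lemma transfer_unit a b : transfer a b \in unitmx.
Proof.
by have := gen_unit a [:: b]; rewrite -transfer_mul unitmx_mul => /andP[].
Qed.

Lemma transfer_sandwich a b w :
  transfer a b *m gen b w *m transfer b a = gen a (b :: rcons w b).
Proof.
rewrite /= !restrE wordprod_rcons.
have -> : A a *m (A b *m (wordprod A w *m A b)) =
    A a *m (A b *m wordprod A w) *m A b by rewrite !mulmxA.
rewrite (coord_mxM (B_sub a b) (B_word_sub b a (b :: w))) ?B_row_free //.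
by rewrite (coord_mxM (B_word_sub b b w) (B_sub b a)) ?B_row_free.
Qed.

Lemma Ggroup_transfer a b X :
  Ggroup A (B a) a X ->
  Ggroup A (B b) b (invmx (transfer a b) *m X *m transfer a b).
Proof.
apply: gen_group_conj (transfer_unit a b) _ X => _ [w ->].
have -> : invmx (transfer a b) *m gen a w *m transfer a b =
    invmx (gen b [:: a]) *m gen b (a :: rcons w a).
  rewrite -transfer_mul -transfer_sandwich invmx_mul ?transfer_unit //.
  by rewrite !mulmxA mulmxKV ?transfer_unit.
by apply: gen_mul; [apply: gen_inv|]; apply: gen_in; eexists.
Qed.

Lemma Ggroup_transfer_inv a b Y :
  Ggroup A (B b) b Y ->
  Ggroup A (B a) a (transfer a b *m Y *m invmx (transfer a b)).
Proof.
have uT := transfer_unit a b; rewrite -{1}[transfer a b]invmxK.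
apply: gen_group_conj; rewrite ?unitmx_inv // invmxK => _ [w ->].
have -> : transfer a b *m gen b w *m invmx (transfer a b) =
    gen a (b :: rcons w b) *m invmx (gen a [:: b]).
  rewrite -transfer_mul -transfer_sandwich invmx_mul ?transfer_unit //.
  by rewrite !mulmxA mulmxK ?transfer_unit.
by apply: gen_mul; [|apply: gen_inv]; apply: gen_in; eexists.
Qed.

Lemma Ggroup_conjugate i j : conjugate (Ggroup A (B i) i) (Ggroup A (B j) j).
Proof.
have uT := transfer_unit i j; exists (transfer i j); split=> // X.
split=> [|/(Ggroup_transfer_inv i)]; first exact: Ggroup_transfer.
by rewrite !mulmxA mulmxV // mul1mx mulmxK.
Qed.

Lemma wedge_word_eqmx i (V : 'I_m -> 'M[R]_#|{: subsets d i}|) :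
  (forall a b, (img (wedge i (A a)) (V b) == V a)%MS) ->
  forall a b w, (V b *m wedge_mx i (A a *m wordprod A w)^T == V a)%MS.
Proof.
move=> hV a b w; elim: w a => [|c w IHw] a /=.
  by rewrite mulmx1 -img_wedge.
rewrite trmx_mul wedge_mxM mulmxA; apply/eqmxP.
apply: eqmx_trans (eqmxMr _ (eqmxP (IHw c))) _.
by apply/eqmxP; rewrite -img_wedge.
Qed.

Lemma wedge_irreducible l i :
  zariski_dense (Ggroup A (B l) l) -> irreducible (fun j => wedge i (A j)).
Proof.
move=> denseG [V [nontrivV hV]]; have [Vl_neq0 Vl_lt] := nontrivV l.
rewrite Range_wedge /Range in Vl_lt.
have wedgeA_B : (wedge_mx i (A l)^T <= wedge_mx i (B l))%MS.
  by apply: wedge_mxS; rewrite (B_eqmx l).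
have Vl_sub : (V l <= wedge_mx i (B l))%MS.
  exact: submx_trans (ltmxW Vl_lt) wedgeA_B.
pose U := V l *m wedge_mx i (pinvmx (B l)).
have stableU : forall X, Ggroup A (B l) l X -> stablemx U (wedge_mx i X^T).
  apply: gen_group_wedge_stable => _ [w ->].
  have XB := coord_mxE (B_word_sub l l w).
  rewrite (stablemx_wedge_coord (B_row_free l) Vl_sub XB).
  by have /andP[] := wedge_word_eqmx hV l l w.
have Vl_coord : U *m wedge_mx i (B l) = V l.
  exact: wedge_coordK (B_row_free l) Vl_sub.
have U_neq0 : U != 0.
  by apply: contraNneq Vl_neq0 => U0; rewrite -Vl_coord U0 mul0mx.
have fullU : row_full U.
  exact: wedge_stable_full U_neq0 (zariski_dense_wedge_stable denseG stableU).
have wedgeA_sub : (wedge_mx i (A l)^T <= V l)%MS.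
  apply: submx_trans wedgeA_B _; rewrite -Vl_coord -{1}[wedge_mx i (B l)]mul1mx.
  by apply: submxMr; rewrite sub1mx fullU.
by move: Vl_lt; rewrite ltmxE wedgeA_sub andbF.
Qed.

End Proposition.

Unset Implicit Arguments.

Theorem proposition2p10 (R : realType) (m d k : nat) (A : 'I_m -> 'M[R]_d)
  (hk : (1 <= k <= d)%N)
  (hrank : forall j, \rank (A j) = k)
  (hrank2 : forall a b, \rank (A a *m A b) = k)
  (B : 'I_m -> 'M[R]_(k, d))
  (hB : forall l, row_free (B l) /\ (B l == Range (A l))%MS) :
  (forall (l : 'I_m) (w : seq 'I_m),
      (img (A l *m wordprod A w) (Range (A l)) <= Range (A l))%MS /\
      restr (B l) (A l *m wordprod A w) \in unitmx) /\
  (forall i j : 'I_m, conjugate (Ggroup A (B i) i) (Ggroup A (B j) j)) /\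
  ((exists l : 'I_m, zariski_dense (Ggroup A (B l) l)) ->
     forall i : nat, (1 <= i <= k)%N ->
       irreducible (fun j : 'I_m => wedge i (A j))).
Proof.
split; [|split].
- move=> l w; split; last exact: (gen_unit hrank hrank2 hB).
  by rewrite /img /Range trmx_mul mulmxA submxMl.
- move=> i j; exact: (Ggroup_conjugate hrank hrank2 hB i j).
- by move=> [l denseG] i _; exact (wedge_irreducible hB denseG).
Qed.
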